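(* Let \(E\in\mathcal{B}_\infty\) with \(\mu(E)<\infty\). Then the restricted space \((E,\mu)\) is purely nonatomic.
   Context: Let $\mathcal{B}$ be the Borel $\sigma$-algebra of $\mathbb{R}$, $\lambda$ the Lebesgue measure, and $\mathcal{B}_{\infty}$ the $\sigma$-algebra on $\mathbb{R}^{\mathbb{N}}$ generated by the cylinder sets $\prod_{i=1}^{m}C_{i}\times\prod_{i=m+1}^{\infty}\mathbb{R}$ with $C_i\in\mathcal{B}$, $m\in\mathbb{N}$. Let $\mathcal{F}(\mathcal{B},\lambda)$ be the set of finite rectangles $\prod_{i\in\mathbb{N}}C_{i}$ with $C_i\in\mathcal{B}$ and $\prod_{i}\lambda(C_i)\in[0,\infty)$, with $\mathrm{vol}(\prod_{i}C_i):=\prod_i\lambda(C_i)$. The measure $\mu$ is the restriction to $\mathcal{B}_{\infty}$ of the outer measure $\mu^{\ast}(A):=\inf\{\sum_{n}\mathrm{vol}(\mathscr{C}_{n}) : \mathscr{C}_{n}\in\mathcal{F}(\mathcal{B},\lambda),\ A\subset\bigcup_{n}\mathscr{C}_{n}\}$ ($\inf\varnothing=\infty$). A measure space is purely nonatomic if it has no atoms, i.e., no measurable $A$ with positive measure such that every measurable $B\subset A$ has measure $0$ or that of $A$. *)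

From mathcomp Require Import all_boot all_order all_algebra.
From mathcomp Require Import all_classical all_reals all_analysis.
Set Implicit Arguments. Unset Strict Implicit. Unset Printing Implicit Defensive.
Import Order.TTheory GRing.Theory Num.Theory.
Local Open Scope classical_set_scope.
Local Open Scope ring_scope.

Section Rinfty.
Variable R : realType.

(* Borel sets of R: the canonical sigma-algebra of measurableTypeR R
   (generated by the half-open intervals). *)
Definition borelR (C : set R) : Prop := @measurable _ (measurableTypeR R) C.

(* cylinder sets  prod_{i<m} C_i x prod_{i>=m} R  (indices shifted to start at 0) *)
Definition cylinder (A : set (nat -> R)) : Prop :=
  exists (m : nat) (C : nat -> set R), (forall i, borelR (C i)) /\
    A = [set x | forall i, (i < m)%N -> C i (x i)].

Definition B_infty : set (set (nat -> R)) := <<s cylinder >>.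

Definition rect (C : nat -> set R) : set (nat -> R) :=
  [set x | forall i, C i (x i)].

Definition partial_vol (C : nat -> set R) (n : nat) : \bar R :=
  (\prod_(i < n) (@lebesgue_measure R (C i)))%E.

Definition finite_rect (C : nat -> set R) : Prop :=
  (forall i, borelR (C i)) /\
  exists r : R, partial_vol C @ \oo --> r%:E.

Definition vol (C : nat -> set R) : \bar R := lim (partial_vol C @ \oo).

(* the outer measure mu^* (inf of empty set is +oo) *)
Definition mu_star (A : set (nat -> R)) : \bar R :=
  ereal_inf [set (\sum_(0 <= n <oo) vol (C n))%E |
    C in [set C : nat -> nat -> set R |
          (forall n, finite_rect (C n)) /\ A `<=` \bigcup_n rect (C n)]].

(* mu := restriction of mu^* to B_infty; an atom of (E, mu) is a
   B_infty-measurable subset A of E with mu(A) > 0 such that every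
   measurable B ⊆ A has measure 0 or mu(A). *)
Definition atom_in (E A : set (nat -> R)) : Prop :=
  B_infty A /\ A `<=` E /\ (0 < mu_star A)%E /\
  forall B, B_infty B -> B `<=` A -> mu_star B = 0%E \/ mu_star B = mu_star A.

Definition purely_nonatomic_on (E : set (nat -> R)) : Prop :=
  ~ exists A, atom_in E A.

End Rinfty.

(* Cover an atom A of finite measure a by countably many finite rectangles.
   Slicing the first side of a finite rectangle into strips of small enough
   width cuts it into countably many finite rectangles of volume at most a/2;
   A meets each of them in a B_infty set of measure < a, hence of measure 0
   since A is an atom.  Countable subadditivity of mu_star, obtained by
   identifying it with the outer measure generated by the volume of
   rectangles, then forces mu_star A = 0. *)

From mathcomp Require Import all_boot all_order all_algebra.
From mathcomp Require Import all_classical all_reals all_analysis.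
From mathcomp Require Import ring.
Set Implicit Arguments. Unset Strict Implicit. Unset Printing Implicit Defensive.
Import Order.TTheory GRing.Theory Num.Theory numFieldNormedType.Exports.
Local Open Scope classical_set_scope.
Local Open Scope ring_scope.

Section finite_rectangles.
Variable R : realType.
Local Notation lam := (@lebesgue_measure R).
(* R^N with B_infty as its measurable sets. *)
Local Notation Rinf := (g_sigma_algebraType (@cylinder R)).
Implicit Types (C D : nat -> set R) (S : set R) (X : set (nat -> R)).
Local Open Scope ereal_scope.

Lemma rect_measurable C : (forall i, borelR (C i)) -> measurable (rect C : set Rinf).
Proof.
move=> mC; have -> : rect C = \bigcap_m [set x | forall i, (i < m)%N -> C i (x i)].
  by apply/seteqP; split => [x Cx m _ i _|x Cx i]; [exact: Cx | apply: (Cx i.+1)].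
by apply: bigcapT_measurable => m; apply: sub_sigma_algebra; exists m, C.
Qed.

Lemma partial_vol_ge0 C n : 0 <= partial_vol C n.
Proof. by apply: prode_ge0 => i _; exact: measure_ge0. Qed.

Lemma vol_ge0 C : finite_rect C -> 0 <= vol C.
Proof.
move=> [_ [r Cr]]; apply: lime_ge; first by apply/cvg_ex; exists r%:E.
exact: nearW (partial_vol_ge0 C).
Qed.

Lemma partial_vol_empty_side C i : C i = set0 -> partial_vol C @ \oo --> 0.
Proof.
move=> Ci0; apply: cvg_near_cst; exists i.+1 => // n /= lt_in.
by rewrite /partial_vol (bigD1 (Ordinal lt_in)) //= Ci0 measure0 mul0e.
Qed.

Lemma vol_empty_side C i : C i = set0 -> vol C = 0.
Proof. by move/partial_vol_empty_side/cvg_lim; apply. Qed.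

Lemma finite_rect0 : finite_rect (fun=> set0 : set R).
Proof.
by split=> [i|]; [exact: measurable0 | exists 0%R; exact: (@partial_vol_empty_side _ 0)].
Qed.

Lemma rect_eq0 C : rect C = set0 -> exists i, C i = set0.
Proof.
move=> C0; apply: contrapT => /forallNP Cn0.
have /choice[x Cx] : forall i, exists t, C i t by move=> i; apply/set0P/eqP/Cn0.
by have : rect C x by []; rewrite C0.
Qed.

Lemma rect_inj C D : rect C = rect D -> rect C !=set0 -> C = D.
Proof.
move=> CD [x Cx]; apply/funext => i.
have side_sub C' D' : rect C' = rect D' -> rect C' x -> C' i `<=` D' i.
  move=> CD' C'x t C'it; pose y j := if j == i then t else x j.
  have : rect C' y by move=> j; rewrite /y; case: eqP => [->|].
  by rewrite CD' => /(_ i); rewrite /y eqxx.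
by apply/seteqP; split; apply: side_sub; rewrite // -CD.
Qed.

Lemma vol_rect_eq C D : rect C = rect D -> vol C = vol D.
Proof.
move=> CD; have [C0|/eqP/set0P Cn0] := pselect (rect C = set0); last first.
  by rewrite (rect_inj CD Cn0).
have [i /vol_empty_side ->] := rect_eq0 C0.
by have [j /vol_empty_side ->] := rect_eq0 (etrans (esym CD) C0).
Qed.

(* By vol_rect_eq this is vol C on X = rect C for a finite rectangle C, and +oo
   on all other sets. *)
Definition rect_vol (X : set Rinf) : \bar R :=
  ereal_inf [set vol C | C in [set C | finite_rect C /\ rect C = X]].

Lemma rect_vol_ge0 X : 0 <= rect_vol X.
Proof. by apply: le_ereal_inf_tmp => _ [C [fC _] <-]; exact: vol_ge0. Qed.

Lemma rect_volE C : finite_rect C -> rect_vol (rect C) = vol C.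
Proof.
move=> fC; rewrite /rect_vol [X in ereal_inf X](_ : _ = [set vol C]) ?ereal_inf1//.
apply/seteqP; split => [_ [D [_ DC] <-]|_ ->]; last by exists C.
exact: vol_rect_eq.
Qed.

Lemma rect_vol_lty X : rect_vol X < +oo -> exists2 C, finite_rect C & rect C = X.
Proof. by move=> /ereal_inf_lt[_ [C [fC CX] _] _]; exists C. Qed.

Lemma mu_star_mu_ext (X : set Rinf) : mu_star X = mu_ext rect_vol X.
Proof.
apply/eqP; rewrite eq_le; apply/andP; split.
  apply: le_ereal_inf_tmp => _ [F [mF XF] <-].
  have [[k Fk]|/forallNP Ffin] := pselect (exists k, rect_vol (F k) = +oo).
    rewrite (eseries_pinfty _ _ Fk) ?leey// => n _.
    by rewrite gt_eqF// (lt_le_trans _ (rect_vol_ge0 _)).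
  have /choice[C FC] k : exists C, finite_rect C /\ rect C = F k.
    by have [|C] := @rect_vol_lty (F k); [rewrite ltey; exact/eqP/Ffin | exists C].
  apply: ereal_inf_lbound; exists C.
    by split => [k|]; [exact: (FC k).1 | rewrite (funext (fun k => (FC k).2))].
  by apply: eq_eseriesr => k _; rewrite -(FC k).2 rect_volE //; exact: (FC k).1.
apply: le_ereal_inf_tmp => _ [C [fC XC] <-]; apply: ereal_inf_lbound.
exists (fun k => rect (C k)).
  by split => // k; apply: rect_measurable; exact: (fC k).1.
by apply: eq_eseriesr => k _; exact: rect_volE.
Qed.

Lemma mu_star_ge0 X : 0 <= mu_star X.
Proof. by rewrite mu_star_mu_ext; apply: mu_ext_ge0; exact: rect_vol_ge0. Qed.

Lemma le_mu_star : {homo @mu_star R : A B / A `<=` B >-> A <= B}.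
Proof. by move=> A B AB; rewrite !mu_star_mu_ext; exact: le_mu_ext. Qed.

Lemma mu_star_sigma_subadditive : sigma_subadditive (@mu_star R).
Proof.
move=> F; rewrite !mu_star_mu_ext (eq_eseriesr (fun n _ => mu_star_mu_ext (F n))).
exact: (@mu_ext_sigma_subadditive _ Rinf R rect_vol rect_vol_ge0).
Qed.

Lemma mu_star_le_vol X D : finite_rect D -> X `<=` rect D -> mu_star X <= vol D.
Proof.
move=> fD XD; pose C n := if n is 0 then D else fun=> set0.
have fC n : finite_rect (C n) by case: n => [|n]; [exact: fD | exact: finite_rect0].
apply: ereal_inf_lbound; exists C; first by split=> // x /XD Dx; exists 0%N.
rewrite (@nneseriesD1 _ _ 0) => [|k _|//]; last exact: vol_ge0.
by rewrite eseries0 ?adde0// => -[|k] // _ _; exact: (@vol_empty_side _ 0).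
Qed.

Lemma mu_star_lty_cover X : mu_star X < +oo ->
  exists2 C : nat -> nat -> set R,
    (forall n, finite_rect (C n)) & X `<=` \bigcup_n rect (C n).
Proof. by move=> /ereal_inf_lt[_ [C [fC XC] _] _]; exists C. Qed.

Lemma mu_star_bigcup_null X (F : nat -> set (nat -> R)) :
  X `<=` \bigcup_n F n -> (forall n, mu_star (F n) = 0) -> mu_star X = 0.
Proof.
move=> XF F0; apply/eqP; rewrite eq_le mu_star_ge0 andbT.
apply: le_trans (le_mu_star XF) (le_trans (mu_star_sigma_subadditive F) _).
by rewrite eseries0 // => n _ _; exact: F0.
Qed.

Definition restrict0 C S : nat -> set R := fun i => if i is 0 then C 0%N `&` S else C i.

Lemma partial_volS C n : partial_vol C n.+1 = lam (C 0%N) * \prod_(i < n) lam (C i.+1).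
Proof. by rewrite /partial_vol big_ord_recl. Qed.

Lemma lebesgue_side0_gt0 C v : partial_vol C @ \oo --> v%:E -> v != 0%R ->
  exists2 c, lam (C 0%N) = c%:E & (0 < c)%R.
Proof.
move=> Cv v_neq0.
have {}Cv : (fun n => partial_vol C n.+1) @ \oo --> v%:E by rewrite cvg_shiftS.
have not_ev0 : ~ \forall n \near \oo, partial_vol C n.+1 = 0.
  move=> ev0; have /(congr1 fine)/= v0 : 0 = v%:E.
    by rewrite -(lim_near_cst (@ereal_hausdorff R) ev0); exact: cvg_lim Cv.
  by rewrite -v0 eqxx in v_neq0.
(* A first side of measure 0 or +oo would make the eventually finite partial
   products eventually vanish. *)
have : 0 <= lam (C 0%N) by [].
case C0E : (lam (C 0%N)) => [c| |] // _.
  exists c => //; rewrite lt0r -lee_fin -C0E measure_ge0 andbT; apply/eqP => c0.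
  by apply: not_ev0; apply: nearW => n; rewrite partial_volS C0E c0 mul0e.
exfalso; have [Cfin _] := (fine_cvgP _ _).1 Cv.
apply: not_ev0; apply: filterS Cfin => n; rewrite partial_volS C0E.
have : 0 <= \prod_(i < n) lam (C i.+1) by apply: prode_ge0 => i _; exact: measure_ge0.
by rewrite le_eqVlt => /orP[/eqP <-|tail_gt0]; [rewrite mule0 | rewrite gt0_mulye].
Qed.

Lemma cvg_partial_vol_restrict0 C S v c d : lam (C 0%N) = c%:E -> (0 < c)%R ->
  lam (C 0%N `&` S) = d%:E -> partial_vol C @ \oo --> v%:E ->
  partial_vol (restrict0 C S) @ \oo --> (d / c * v)%:E.
Proof.
move=> C0c c_gt0 CId Cv; rewrite -cvg_shiftS.
have {}Cv : (fun n => partial_vol C n.+1) @ \oo --> v%:E by rewrite cvg_shiftS.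
have -> : (fun n => partial_vol (restrict0 C S) n.+1) =
          (fun n => (d / c)%:E * partial_vol C n.+1).
  by apply/funext => n; rewrite !partial_volS /= CId C0c muleA -EFinM divfK ?gt_eqF.
by have := cvgeZl (y := (d / c)%:E) isT Cv; rewrite -EFinM.
Qed.

(* The strips [z h, (z + 1) h), z : int, enumerated through the countable
   encoding of int. *)
Definition slab (h : R) (j : nat) : set R :=
  if @unpickle int j is Some z then `[(z%:~R * h)%R, (z%:~R * h + h)%R[ else set0.

Lemma slab_measurable h j : borelR (slab h j).
Proof.
by rewrite /slab; case: unpickle => [z|]; [exact: measurable_itv | exact: measurable0].
Qed.

Lemma lebesgue_slab_le h j : (0 < h)%R -> lam (slab h j) <= h%:E.
Proof.
move=> h_gt0; rewrite /slab; case: unpickle => [z|]; last by rewrite measure0 lee_fin ltW.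
by rewrite lebesgue_measure_itv /= lte_fin ltrDl h_gt0 -EFinD addrAC subrr add0r.
Qed.

Lemma slab_cover h t : (0 < h)%R -> exists j, slab h j t.
Proof.
move=> h_gt0; exists (pickle (Num.floor (t / h))); rewrite /slab pickleK /=.
have /andP[floor_le lt_floor] := floor_itv (t / h).
rewrite in_itv /=; apply/andP; split; first by rewrite -ler_pdivlMr.
by move: lt_floor; rewrite ltr_pdivrMr// intrD mulrDl mul1r.
Qed.

Lemma finite_rect_fine_cover C (e : R) : finite_rect C -> (0 < e)%R ->
  exists2 D : nat -> nat -> set R, (forall j, finite_rect (D j) /\ vol (D j) <= e%:E) &
    rect C `<=` \bigcup_j rect (D j).
Proof.
move=> [mC [v Cv]] e_gt0.
have volC : vol C = v%:E by apply: cvg_lim.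
have [v0|v_neq0] := eqVneq v 0%R.
  exists (fun=> C) => [j|x Cx]; last by exists 0%N.
  by rewrite volC v0 lee_fin (ltW e_gt0); split=> //; split=> //; exists v.
have v_gt0 : (0 < v)%R.
  by rewrite lt0r v_neq0 -lee_fin -volC vol_ge0 //; split=> //; exists v.
have [c C0c c_gt0] := lebesgue_side0_gt0 Cv v_neq0.
(* vol (restrict0 C S) = lam (C 0 `&` S) / c * v, so strips of width e c / v do. *)
pose h := (e * c / v)%R; have h_gt0 : (0 < h)%R by rewrite divr_gt0 ?mulr_gt0.
exists (fun j => restrict0 C (slab h j)) => [j|x Cx]; last first.
  have [j slab_x] := slab_cover (x 0%N) h_gt0.
  by exists j => // -[|i] /=; [split => //; exact: Cx | exact: Cx].
have side0_le : lam (C 0%N `&` slab h j) <= h%:E.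
  apply: le_trans (lebesgue_slab_le j h_gt0); apply: le_measure; rewrite ?inE//.
  - exact: measurableI (mC 0%N) (slab_measurable h j).
  - exact: slab_measurable.
have side0_fin : lam (C 0%N `&` slab h j) \is a fin_num.
  by rewrite ge0_fin_numE ?measure_ge0// (le_lt_trans side0_le) ?ltry.
have restr_cvg := cvg_partial_vol_restrict0 C0c c_gt0 (esym (fineK side0_fin)) Cv.
split; first split.
- by case=> [|i] /=; [exact: measurableI (mC 0%N) (slab_measurable h j) | exact: mC].
- by eexists; exact: restr_cvg.
have -> : vol (restrict0 C (slab h j)) = (fine (lam (C 0%N `&` slab h j)) / c * v)%:E.
  by apply: cvg_lim.
rewrite lee_fin.
have -> : e = (h / c * v)%R by rewrite /h; field; rewrite ?gt_eqF.
by rewrite ler_wpM2r ?(ltW v_gt0)// ler_pM2r ?invr_gt0// -lee_fin fineK.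
Qed.

Lemma atom_rect_null E A D : atom_in E A -> mu_star A < +oo -> finite_rect D ->
  mu_star (A `&` rect D) = 0.
Proof.
move=> [mA [_ [A_gt0 A_atom]]] A_fin fD.
have A_fin_num : mu_star A \is a fin_num by rewrite ge0_fin_numE ?mu_star_ge0.
pose a := fine (mu_star A); have a_gt0 : (0 < a)%R by rewrite -lte_fin fineK.
have [D' fD' DD'] := finite_rect_fine_cover fD (divr_gt0 a_gt0 (ltr0n _ 2)).
have piece_null j : mu_star (A `&` rect (D' j)) = 0.
  have [fD'j vol_le] := fD' j.
  have : mu_star (A `&` rect (D' j)) < mu_star A.
    rewrite -(fineK A_fin_num) (le_lt_trans (mu_star_le_vol fD'j (@subIsetr _ _ _)))//.
    by rewrite (le_lt_trans vol_le)// lte_fin ltr_pdivrMr// ltr_pMr// ltr1n.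
  have mAD' : measurable (A `&` rect (D' j) : set Rinf).
    by apply: measurableI => //; apply: rect_measurable; exact: fD'j.1.
  by case: (A_atom _ mAD' (@subIsetl _ _ _)) => // ->; rewrite ltxx.
apply: mu_star_bigcup_null piece_null => x [Ax /DD' [j _ D'x]].
by exists j.
Qed.

End finite_rectangles.

Theorem propositionA5 (R : realType) (E : set (nat -> R)) :
  B_infty E -> (mu_star E < +oo)%E -> purely_nonatomic_on E.
Proof.
move=> _ E_fin [A A_atom]; have [_ [AE [A_gt0 _]]] := A_atom.
have A_fin : (mu_star A < +oo)%E := le_lt_trans (le_mu_star AE) E_fin.
have [C fC AC] := mu_star_lty_cover A_fin.
suff A0 : mu_star A = 0%E by rewrite A0 ltxx in A_gt0.
apply: (@mu_star_bigcup_null _ _ (fun n => A `&` rect (C n))).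
  by move=> x Ax; have [n _ Cx] := AC x Ax; exists n.
by move=> n; exact: atom_rect_null A_atom A_fin (fC n).
Qed.
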